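(* Let $p\in A^m$, $A=\mathbb C[t_1,\dots,t_n]$, with $p\neq0$, and let $R$ be a matrix over $\mathcal W_n$ whose rows generate $\ker(\kappa_p)$. Then the VMPUM $\{g\in C^\infty(\mathbb R^n,\mathbb C)^m: R\bullet g=0\}$ of $\{p\}$ equals $\{c\,p: c\in\mathbb C\}$; in particular it is a one-dimensional $\mathbb C$-vector space.
   Context: $\mathcal W_n$ is the $n$-th Weyl algebra $\mathbb C[t_1,\dots,t_n]\langle\partial_1,\dots,\partial_n\rangle$ with $\partial_it_j=t_j\partial_i+\delta_{ij}$, acting on $C^\infty(\mathbb R^n,\mathbb C)$ (which contains the polynomial functions $A$) by $\partial_i\bullet f=\partial f/\partial t_i$ and multiplication by $t_i$. For a matrix $R\in\mathcal W_n^{r\times m}$, $(R\bullet g)_i=\sum_jR_{ij}\bullet g_j$. For $p\in A^m$, $\ker(\kappa_p)=\{a\in\mathcal W_n^{1\times m}:\sum_ia_i\bullet p_i=0\}$. *)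

From Stdlib Require Import Reals List ClassicalEpsilon.
Open Scope R_scope.

Definition Cpx : Type := (R * R)%type.
Definition C0 : Cpx := (0, 0).
Definition C1 : Cpx := (1, 0).
Definition RtoC (r : R) : Cpx := (r, 0).
Definition Cadd (a b : Cpx) : Cpx := (fst a + fst b, snd a + snd b).
Definition Cneg (a : Cpx) : Cpx := (- fst a, - snd a).
Definition Cmul (a b : Cpx) : Cpx :=
  (fst a * fst b - snd a * snd b, fst a * snd b + snd a * fst b).
Definition cnorm (z : Cpx) : R := Rabs (fst z) + Rabs (snd z).

(** * Functions R^n -> Cpx.  A point of R^n is represented by [x : nat -> R],
    only the coordinates [x 0, ..., x (n-1)] being relevant (see [supported]). *)
Definition pt : Type := nat -> R.
Definition fn : Type := pt -> Cpx.

Definition supported (n : nat) (f : fn) : Prop :=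
  forall x y : pt, (forall j, (j < n)%nat -> x j = y j) -> f x = f y.

Definition upd (x : pt) (i : nat) (h : R) : pt :=
  fun j => if Nat.eqb j i then x j + h else x j.

Definition has_pd (f : fn) (i : nat) (x : pt) (l : Cpx) : Prop :=
  derivable_pt_lim (fun h => fst (f (upd x i h))) 0 (fst l) /\
  derivable_pt_lim (fun h => snd (f (upd x i h))) 0 (snd l).

(** The partial derivative d f / d t_i (meaningful where it exists). *)
Definition pd (f : fn) (i : nat) : fn :=
  fun x => epsilon (inhabits C0) (has_pd f i x).

Definition cont (n : nat) (f : fn) : Prop :=
  forall x eps, 0 < eps -> exists del, 0 < del /\
    forall y : pt, (forall j, (j < n)%nat -> Rabs (y j - x j) < del) ->
      cnorm (Cadd (f y) (Cneg (f x))) < eps.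

Fixpoint iter_ok (n : nat) (l : list nat) (f : fn) : Prop :=
  match l with
  | nil => cont n f
  | i :: l' => (forall x, exists d, has_pd f i x d) /\ iter_ok n l' (pd f i)
  end.

Definition smooth (n : nat) (f : fn) : Prop :=
  supported n f /\
  forall l : list nat, Forall (fun i => (i < n)%nat) l -> iter_ok n l f.

(** * The Weyl algebra W_n, presented by generators: constants, t_i, d_i,
    sums and products.  Two terms denote the same element of W_n iff they
    act identically on C^infty(R^n,C) (the action is faithful). *)
Inductive wterm : Type :=
| WC (c : Cpx)
| WT (i : nat)
| WD (i : nat)
| WAdd (a b : wterm)
| WMul (a b : wterm).

Fixpoint wf (n : nat) (w : wterm) : Prop :=
  match w with
  | WC _ => True
  | WT i => (i < n)%nat
  | WD i => (i < n)%nat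
  | WAdd a b => wf n a /\ wf n b
  | WMul a b => wf n a /\ wf n b
  end.

(** Terms without d_i: elements of A = C[t_1..t_n]. *)
Fixpoint is_poly (w : wterm) : Prop :=
  match w with
  | WC _ => True
  | WT _ => True
  | WD _ => False
  | WAdd a b => is_poly a /\ is_poly b
  | WMul a b => is_poly a /\ is_poly b
  end.

Fixpoint act (w : wterm) (f : fn) : fn :=
  match w with
  | WC c => fun x => Cmul c (f x)
  | WT i => fun x => Cmul (RtoC (x i)) (f x)
  | WD i => pd f i
  | WAdd a b => fun x => Cadd (act a f x) (act b f x)
  | WMul a b => act a (act b f)
  end.

Definition weq (n : nat) (a b : wterm) : Prop :=
  forall f : fn, smooth n f -> forall x, act a f x = act b f x.

Definition polyfun (q : wterm) : fn := act q (fun _ => C1).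

Fixpoint wsum (r : nat) (w : nat -> wterm) : wterm :=
  match r with
  | O => WC C0
  | S r' => WAdd (wsum r' w) (w r')
  end.

Fixpoint rowact (m : nat) (a : nat -> wterm) (g : nat -> fn) : fn :=
  match m with
  | O => fun _ => C0
  | S m' => fun x => Cadd (rowact m' a g x) (act (a m') (g m') x)
  end.

From Pilot Require Import Defs.
From Stdlib Require Import Reals List.
From Stdlib Require Import Lra Lia ClassicalEpsilon FunctionalExtensionality.
Open Scope R_scope.

(* If [R g = 0], every row of [ker(kappa_p)] annihilates [g], being a left
   combination of the rows of [R].  Choose [x0] with [p_j0(x0) <> 0].  Three kinds
   of annihilators of [p] give: [d_i^(deg p_j + 1) g_j = 0];
   [p_j0 d_i g_j0 = (d_i p_j0) g_j0], so [g_j0 / p_j0] is constant near [x0]; and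
   [p_j0 g_j = p_j g_j0].  Hence [g - c p] vanishes on a box around [x0] for
   [c = g_j0(x0) / p_j0(x0)], and a function vanishing on a box whose high partial
   derivatives in each coordinate vanish is zero. *)

Ltac Cpx_ring := unfold Cmul, Cadd, Cneg, C0, Defs.C1, RtoC;
  apply injective_projections; simpl; ring.

(** * Complex arithmetic *)

Definition Cinv (z : Cpx) : Cpx :=
  (fst z / (fst z * fst z + snd z * snd z), - snd z / (fst z * fst z + snd z * snd z)).

Lemma Cmul_Cinv z : z <> C0 -> Cmul z (Cinv z) = Defs.C1.
Proof.
  intros Hz. destruct z as [a b].
  assert (a * a + b * b <> 0) by (intro Z; apply Hz; unfold C0; f_equal; nra).
  unfold Cmul, Cinv, Defs.C1; simpl. f_equal; field; auto.
Qed.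

Lemma Cmul_Cinv_cancel z q : q <> C0 -> Cmul (Cmul z (Cinv q)) q = z.
Proof.
  intros Hq. replace (Cmul (Cmul z (Cinv q)) q) with (Cmul z (Cmul q (Cinv q))) by Cpx_ring.
  rewrite Cmul_Cinv by auto. Cpx_ring.
Qed.

Lemma Cmul_eq0_reg_l q z : q <> C0 -> Cmul q z = C0 -> z = C0.
Proof.
  intros Hq Hz.
  replace z with (Cmul (Cmul q (Cinv q)) z) by (rewrite Cmul_Cinv by auto; Cpx_ring).
  replace (Cmul (Cmul q (Cinv q)) z) with (Cmul (Cinv q) (Cmul q z)) by Cpx_ring.
  rewrite Hz. Cpx_ring.
Qed.

Lemma Csub_scal_eq0 a c b : Cadd a (Cmul (Cneg c) b) = C0 -> a = Cmul c b.
Proof.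
  destruct a as [a1 a2]. unfold Cadd, Cmul, Cneg, C0; simpl.
  intros H; injection H; intros; f_equal; lra.
Qed.

Lemma cnorm_ge0 z : 0 <= cnorm z.
Proof. unfold cnorm. pose proof (Rabs_pos (fst z)); pose proof (Rabs_pos (snd z)); lra. Qed.

Lemma cnorm_gt0 z : z <> C0 -> 0 < cnorm z.
Proof.
  intros Hz. destruct z as [a b]. unfold cnorm; simpl.
  pose proof (Rabs_pos a); pose proof (Rabs_pos b).
  destruct (Req_dec a 0) as [-> | Ha]; [destruct (Req_dec b 0) as [-> | Hb] |].
  - now elim Hz.
  - pose proof (Rabs_pos_lt b Hb); lra.
  - pose proof (Rabs_pos_lt a Ha); lra.
Qed.

Lemma cnorm_Cneg z : cnorm (Cneg z) = cnorm z.
Proof. unfold cnorm, Cneg; simpl; rewrite !Rabs_Ropp; ring. Qed.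

Lemma cnorm_triang a b : cnorm (Cadd a b) <= cnorm a + cnorm b.
Proof.
  unfold cnorm, Cadd; simpl.
  pose proof (Rabs_triang (fst a) (fst b)); pose proof (Rabs_triang (snd a) (snd b)); lra.
Qed.

Lemma cnorm_Cmul_le c z : cnorm (Cmul c z) <= cnorm c * cnorm z.
Proof.
  destruct c as [c1 c2], z as [z1 z2]. unfold cnorm, Cmul; simpl.
  pose proof (Rabs_triang (c1 * z1) (- (c2 * z2))).
  pose proof (Rabs_triang (c1 * z2) (c2 * z1)).
  rewrite Rabs_Ropp, !Rabs_mult in *.
  pose proof (Rabs_pos c1); pose proof (Rabs_pos c2); pose proof (Rabs_pos z1); pose proof (Rabs_pos z2).
  unfold Rminus. nra.
Qed.

Lemma cnorm_RtoC_mul r z : cnorm (Cmul (RtoC r) z) = Rabs r * cnorm z.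
Proof.
  unfold cnorm, Cmul, RtoC; simpl.
  replace (r * fst z - 0 * snd z) with (r * fst z) by ring.
  replace (r * snd z + 0 * fst z) with (r * snd z) by ring.
  rewrite !Rabs_mult; ring.
Qed.

(** * Partial derivatives *)

Lemma upd_0 x i : upd x i 0 = x.
Proof. apply functional_extensionality; intro j; unfold upd; destruct (Nat.eqb j i); ring. Qed.

Lemma upd_upd x i t s : upd (upd x i t) i s = upd x i (t + s).
Proof. apply functional_extensionality; intro j; unfold upd; destruct (Nat.eqb j i); ring. Qed.

Lemma derivable_pt_lim_eq F x l l' : l = l' -> derivable_pt_lim F x l -> derivable_pt_lim F x l'.
Proof. now intros ->. Qed.

Lemma has_pd_unique f i x l1 l2 : has_pd f i x l1 -> has_pd f i x l2 -> l1 = l2.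
Proof. intros [? ?] [? ?]. apply injective_projections; eapply uniqueness_limite; eauto. Qed.

Lemma has_pd_pd f i x : (exists l, has_pd f i x l) -> has_pd f i x (pd f i x).
Proof. exact (epsilon_spec (inhabits C0) (has_pd f i x)). Qed.

Lemma pd_eq f i x l : has_pd f i x l -> pd f i x = l.
Proof. intros H. eapply has_pd_unique; [apply has_pd_pd|]; eauto. Qed.

Lemma has_pd_ext f g i x l l' :
  (forall y, f y = g y) -> l = l' -> has_pd f i x l -> has_pd g i x l'.
Proof. intros E <-. now replace g with f by (apply functional_extensionality; auto). Qed.

Lemma has_pd_const c i x : has_pd (fun _ => c) i x C0.
Proof. split; apply derivable_pt_lim_const. Qed.

Lemma has_pd_add f g i x a b : has_pd f i x a -> has_pd g i x b ->
  has_pd (fun y => Cadd (f y) (g y)) i x (Cadd a b).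
Proof. intros [? ?] [? ?]; split; now apply derivable_pt_lim_plus. Qed.

Lemma has_pd_mul f g i x a b : has_pd f i x a -> has_pd g i x b ->
  has_pd (fun y => Cmul (f y) (g y)) i x (Cadd (Cmul a (g x)) (Cmul (f x) b)).
Proof.
  intros [F1 F2] [G1 G2].
  pose proof (derivable_pt_lim_mult _ _ _ _ _ F1 G1) as P11.
  pose proof (derivable_pt_lim_mult _ _ _ _ _ F1 G2) as P12.
  pose proof (derivable_pt_lim_mult _ _ _ _ _ F2 G1) as P21.
  pose proof (derivable_pt_lim_mult _ _ _ _ _ F2 G2) as P22.
  cbv beta in P11, P12, P21, P22. rewrite upd_0 in P11, P12, P21, P22.
  split; simpl.
  - eapply derivable_pt_lim_eq; [|exact (derivable_pt_lim_minus _ _ _ _ _ P11 P22)]. ring.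
  - eapply derivable_pt_lim_eq; [|exact (derivable_pt_lim_plus _ _ _ _ _ P12 P21)]. ring.
Qed.

Lemma has_pd_coord j i x :
  has_pd (fun y => RtoC (y j)) i x (RtoC (if Nat.eqb j i then 1 else 0)).
Proof.
  split; simpl; [|apply derivable_pt_lim_const].
  unfold upd. destruct (Nat.eqb j i); [|apply derivable_pt_lim_const].
  eapply derivable_pt_lim_eq;
    [|exact (derivable_pt_lim_plus _ _ _ _ _ (derivable_pt_lim_const (x j) 0) (derivable_pt_lim_id 0))].
  ring.
Qed.

Lemma has_pd_scal c f i x a : has_pd f i x a -> has_pd (fun y => Cmul c (f y)) i x (Cmul c a).
Proof.
  intro H. eapply has_pd_ext; [reflexivity| |exact (has_pd_mul _ _ _ _ _ _ (has_pd_const c i x) H)].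
  Cpx_ring.
Qed.

Lemma has_pd_coord_mul j f i x a : has_pd f i x a ->
  has_pd (fun y => Cmul (RtoC (y j)) (f y)) i x
    (Cadd (Cmul (RtoC (if Nat.eqb j i then 1 else 0)) (f x)) (Cmul (RtoC (x j)) a)).
Proof. apply has_pd_mul, has_pd_coord. Qed.


(** * Smooth functions *)

Lemma cont_const n c : cont n (fun _ => c).
Proof.
  intros x eps He; exists 1; split; [lra|]; intros.
  replace (Cadd c (Cneg c)) with C0 by Cpx_ring. unfold cnorm, C0; simpl. rewrite Rabs_R0; lra.
Qed.

Lemma cont_add n f g : cont n f -> cont n g -> cont n (fun y => Cadd (f y) (g y)).
Proof.
  intros Hf Hg x eps He.
  destruct (Hf x (eps / 2)) as [d1 [Hd1 H1]]; [lra|].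
  destruct (Hg x (eps / 2)) as [d2 [Hd2 H2]]; [lra|].
  exists (Rmin d1 d2); split; [now apply Rmin_pos|]. intros y Hy.
  assert (A1 : cnorm (Cadd (f y) (Cneg (f x))) < eps / 2).
  { apply H1; intros j Hj; specialize (Hy j Hj); pose proof (Rmin_l d1 d2); lra. }
  assert (A2 : cnorm (Cadd (g y) (Cneg (g x))) < eps / 2).
  { apply H2; intros j Hj; specialize (Hy j Hj); pose proof (Rmin_r d1 d2); lra. }
  replace (Cadd (Cadd (f y) (g y)) (Cneg (Cadd (f x) (g x)))) with
    (Cadd (Cadd (f y) (Cneg (f x))) (Cadd (g y) (Cneg (g x)))) by Cpx_ring.
  pose proof (cnorm_triang (Cadd (f y) (Cneg (f x))) (Cadd (g y) (Cneg (g x)))). lra.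
Qed.

Lemma cont_scal n c f : cont n f -> cont n (fun y => Cmul c (f y)).
Proof.
  intros Hf x eps He. pose proof (cnorm_ge0 c).
  destruct (Hf x (eps / (cnorm c + 1))) as [d [Hd H1]]; [apply Rdiv_lt_0_compat; lra|].
  exists d; split; auto; intros y Hy. specialize (H1 y Hy).
  replace (Cadd (Cmul c (f y)) (Cneg (Cmul c (f x)))) with (Cmul c (Cadd (f y) (Cneg (f x))))
    by Cpx_ring.
  eapply Rle_lt_trans; [apply cnorm_Cmul_le|].
  assert (E : (cnorm c + 1) * (eps / (cnorm c + 1)) = eps) by (field; lra).
  pose proof (cnorm_ge0 (Cadd (f y) (Cneg (f x)))). nra.
Qed.

Lemma cont_coord_mul n j f : (j < n)%nat -> cont n f -> cont n (fun y => Cmul (RtoC (y j)) (f y)).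
Proof.
  intros Hj Hf x eps He.
  set (K := Rabs (x j) + 1). set (M := cnorm (f x) + 1).
  assert (HK : 0 < K) by (unfold K; pose proof (Rabs_pos (x j)); lra).
  assert (HM : 0 < M) by (unfold M; pose proof (cnorm_ge0 (f x)); lra).
  destruct (Hf x (eps / (2 * K))) as [d [Hd H1]]; [apply Rdiv_lt_0_compat; lra|].
  exists (Rmin 1 (Rmin d (eps / (2 * M)))); split.
  { apply Rmin_pos; [lra|]. apply Rmin_pos; auto. apply Rdiv_lt_0_compat; lra. }
  intros y Hy.
  pose proof (Rmin_l 1 (Rmin d (eps / (2 * M)))); pose proof (Rmin_r 1 (Rmin d (eps / (2 * M)))).
  pose proof (Rmin_l d (eps / (2 * M))); pose proof (Rmin_r d (eps / (2 * M))).
  assert (Hfy : cnorm (Cadd (f y) (Cneg (f x))) < eps / (2 * K)).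
  { apply H1; intros k Hk; specialize (Hy k Hk); lra. }
  specialize (Hy j Hj).
  assert (Hyj : Rabs (y j) <= K).
  { unfold K. replace (y j) with (x j + (y j - x j)) by ring.
    pose proof (Rabs_triang (x j) (y j - x j)). lra. }
  replace (Cadd (Cmul (RtoC (y j)) (f y)) (Cneg (Cmul (RtoC (x j)) (f x)))) with
    (Cadd (Cmul (RtoC (y j)) (Cadd (f y) (Cneg (f x)))) (Cmul (RtoC (y j - x j)) (f x)))
    by Cpx_ring.
  eapply Rle_lt_trans; [apply cnorm_triang|]. rewrite !cnorm_RtoC_mul.
  assert (EK : K * (eps / (2 * K)) = eps / 2) by (field; lra).
  assert (EM : M * (eps / (2 * M)) = eps / 2) by (field; lra).
  pose proof (Rabs_pos (y j)); pose proof (Rabs_pos (y j - x j)).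
  pose proof (cnorm_ge0 (Cadd (f y) (Cneg (f x)))); pose proof (cnorm_ge0 (f x)).
  unfold M in *. nra.
Qed.

Definition pdifferentiable (f : fn) (i : nat) : Prop := forall x, exists l, has_pd f i x l.

Lemma pd_const c i : pd (fun _ => c) i = fun _ => C0.
Proof. apply functional_extensionality; intro x. apply pd_eq, has_pd_const. Qed.

Lemma pd_add f g i : pdifferentiable f i -> pdifferentiable g i ->
  pd (fun y => Cadd (f y) (g y)) i = fun y => Cadd (pd f i y) (pd g i y).
Proof.
  intros Hf Hg; apply functional_extensionality; intro x.
  apply pd_eq, has_pd_add; now apply has_pd_pd.
Qed.

Lemma pd_scal c f i : pdifferentiable f i -> pd (fun y => Cmul c (f y)) i = fun y => Cmul c (pd f i y).
Proof. intros Hf; apply functional_extensionality; intro x. apply pd_eq, has_pd_scal, has_pd_pd, Hf. Qed.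

Lemma pd_coord_mul j f i : pdifferentiable f i ->
  pd (fun y => Cmul (RtoC (y j)) (f y)) i =
  fun y => Cadd (Cmul (RtoC (if Nat.eqb j i then 1 else 0)) (f y)) (Cmul (RtoC (y j)) (pd f i y)).
Proof. intros Hf; apply functional_extensionality; intro x. apply pd_eq, has_pd_coord_mul, has_pd_pd, Hf. Qed.

Lemma pdifferentiable_add f g i :
  pdifferentiable f i -> pdifferentiable g i -> pdifferentiable (fun y => Cadd (f y) (g y)) i.
Proof. intros Hf Hg x; destruct (Hf x), (Hg x); eexists; apply has_pd_add; eauto. Qed.

Lemma pdifferentiable_scal c f i : pdifferentiable f i -> pdifferentiable (fun y => Cmul c (f y)) i.
Proof. intros Hf x; destruct (Hf x); eexists; apply has_pd_scal; eauto. Qed.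

Lemma pdifferentiable_coord_mul j f i :
  pdifferentiable f i -> pdifferentiable (fun y => Cmul (RtoC (y j)) (f y)) i.
Proof. intros Hf x; destruct (Hf x); eexists; apply has_pd_coord_mul; eauto. Qed.

Lemma supported_pd n f i : supported n f -> supported n (pd f i).
Proof.
  intros Hs x y Hxy. unfold pd. f_equal.
  assert (E : (fun h => f (upd x i h)) = (fun h => f (upd y i h))).
  { apply functional_extensionality; intro h. apply Hs.
    intros j Hj; unfold upd; now rewrite (Hxy j Hj). }
  unfold has_pd. apply functional_extensionality; intro l.
  change (fun h => fst (f (upd x i h))) with (fun h => fst ((fun h => f (upd x i h)) h)).
  change (fun h => snd (f (upd x i h))) with (fun h => snd ((fun h => f (upd x i h)) h)).
  now rewrite E.
Qed.

Lemma iter_ok_const n l : forall c, iter_ok n l (fun _ => c).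
Proof.
  induction l as [|i l IH]; simpl; intros c.
  - apply cont_const.
  - split; [intro x; eexists; apply has_pd_const | now rewrite pd_const].
Qed.

Lemma iter_ok_add n l : forall f g, iter_ok n l f -> iter_ok n l g ->
  iter_ok n l (fun y => Cadd (f y) (g y)).
Proof.
  induction l as [|i l IH]; simpl; intros f g Hf Hg.
  - now apply cont_add.
  - destruct Hf as [Df Hf], Hg as [Dg Hg].
    split; [now apply pdifferentiable_add | rewrite pd_add by auto; now apply IH].
Qed.

Lemma iter_ok_scal n l : forall c f, iter_ok n l f -> iter_ok n l (fun y => Cmul c (f y)).
Proof.
  induction l as [|i l IH]; simpl; intros c f Hf.
  - now apply cont_scal.
  - destruct Hf as [Df Hf].
    split; [now apply pdifferentiable_scal | rewrite pd_scal by auto; now apply IH].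
Qed.

Lemma smooth_const n c : smooth n (fun _ => c).
Proof. split; [now intros x y _ | intros; apply iter_ok_const]. Qed.

Lemma smooth_add n f g : smooth n f -> smooth n g -> smooth n (fun y => Cadd (f y) (g y)).
Proof.
  intros [S1 H1] [S2 H2]; split.
  - intros x y E; now rewrite (S1 x y E), (S2 x y E).
  - intros; apply iter_ok_add; auto.
Qed.

Lemma smooth_scal n c f : smooth n f -> smooth n (fun y => Cmul c (f y)).
Proof.
  intros [S1 H1]; split.
  - intros x y E; now rewrite (S1 x y E).
  - intros; apply iter_ok_scal; auto.
Qed.

Lemma smooth_cont n f : smooth n f -> cont n f.
Proof. intros [_ H]. apply (H nil); constructor. Qed.

Lemma smooth_pdifferentiable n f i : (i < n)%nat -> smooth n f -> pdifferentiable f i.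
Proof. intros Hi [_ H]. exact (proj1 (H (i :: nil) (Forall_cons i Hi (Forall_nil _)))). Qed.

Lemma smooth_pd n f i : (i < n)%nat -> smooth n f -> smooth n (pd f i).
Proof.
  intros Hi [S H]; split; [now apply supported_pd|].
  intros l Hl. exact (proj2 (H (i :: l) (Forall_cons i Hi Hl))).
Qed.

Lemma smooth_coord_mul n j f : (j < n)%nat -> smooth n f ->
  smooth n (fun y => Cmul (RtoC (y j)) (f y)).
Proof.
  intros Hj Hf; split.
  - destruct Hf as [S _]. intros x y E. now rewrite (S x y E), (E j Hj).
  - intros l Hl. revert f Hf. induction l as [|i l IH]; intros f Hf; simpl.
    + apply cont_coord_mul, smooth_cont; auto.
    + inversion Hl; subst.
      assert (Df := smooth_pdifferentiable n f i ltac:(assumption) Hf).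
      split; [now apply pdifferentiable_coord_mul|].
      rewrite pd_coord_mul by auto.
      apply iter_ok_add; [apply iter_ok_scal, (proj2 Hf)|apply IH, smooth_pd]; auto.
Qed.

(** * The action of the Weyl algebra *)

Lemma smooth_act n w f : wf n w -> smooth n f -> smooth n (act w f).
Proof.
  revert f; induction w; simpl; intros f Hw Hf.
  - now apply smooth_scal.
  - now apply smooth_coord_mul.
  - now apply smooth_pd.
  - destruct Hw; apply smooth_add; auto.
  - destruct Hw; auto.
Qed.

Lemma act_add n w : forall f g, wf n w -> smooth n f -> smooth n g ->
  forall x, act w (fun y => Cadd (f y) (g y)) x = Cadd (act w f x) (act w g x).
Proof.
  induction w; simpl; intros f g Hw Hf Hg x; try Cpx_ring.
  - now rewrite pd_add by (apply (smooth_pdifferentiable n); auto).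
  - destruct Hw. rewrite IHw1, IHw2 by auto. Cpx_ring.
  - destruct Hw.
    replace (act w2 (fun y => Cadd (f y) (g y))) with (fun y => Cadd (act w2 f y) (act w2 g y))
      by (apply functional_extensionality; intro; rewrite IHw2; auto).
    apply IHw1; auto; now apply smooth_act.
Qed.

Lemma act_scal n w : forall c f, wf n w -> smooth n f ->
  forall x, act w (fun y => Cmul c (f y)) x = Cmul c (act w f x).
Proof.
  induction w; simpl; intros c0 f Hw Hf x; try Cpx_ring.
  - now rewrite pd_scal by (apply (smooth_pdifferentiable n); auto).
  - destruct Hw. rewrite IHw1, IHw2 by auto. Cpx_ring.
  - destruct Hw.
    replace (act w2 (fun y => Cmul c0 (f y))) with (fun y => Cmul c0 (act w2 f y))
      by (apply functional_extensionality; intro; rewrite IHw2; auto).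
    apply IHw1; auto; now apply smooth_act.
Qed.

Lemma act_zero w x : act w (fun _ => C0) x = C0.
Proof.
  revert x; induction w; simpl; intros x; try Cpx_ring.
  - now rewrite pd_const.
  - rewrite IHw1, IHw2; Cpx_ring.
  - replace (act w2 (fun _ => C0)) with (fun _ : pt => C0)
      by (apply functional_extensionality; intro; now rewrite IHw2).
    auto.
Qed.

Lemma act_poly q : is_poly q -> forall f x, act q f x = Cmul (polyfun q x) (f x).
Proof.
  unfold polyfun. induction q; simpl; intros Hq f x; try Cpx_ring.
  - contradiction.
  - destruct Hq as [H1 H2]. rewrite (IHq1 H1 f x), (IHq2 H2 f x); Cpx_ring.
  - destruct Hq as [H1 H2].
    rewrite (IHq1 H1 (act q2 f) x), (IHq1 H1 (act q2 (fun _ => Defs.C1)) x), (IHq2 H2 f x).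
    Cpx_ring.
Qed.

Lemma polyfun_mul a b : is_poly a -> forall x, polyfun (WMul a b) x = Cmul (polyfun a x) (polyfun b x).
Proof. intros Ha x. unfold polyfun at 1; simpl. now rewrite act_poly. Qed.

Lemma smooth_polyfun n q : wf n q -> smooth n (polyfun q).
Proof. intros; apply smooth_act; auto; apply smooth_const. Qed.

(** * Derivatives of polynomials *)

Fixpoint deg (q : wterm) : nat :=
  match q with
  | WC _ | WD _ => 0
  | WT _ => 1
  | WAdd a b => Nat.max (deg a) (deg b)
  | WMul a b => deg a + deg b
  end.

(** In a product, a factor of degree 0 is a constant, so its Leibniz term is
    dropped: this makes [deg (dterm i q) <= deg q - 1] hold for constant products. *)
Fixpoint dterm (i : nat) (q : wterm) : wterm :=
  match q with
  | WC _ | WD _ => WC C0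
  | WT j => WC (if Nat.eqb j i then Defs.C1 else C0)
  | WAdd a b => WAdd (dterm i a) (dterm i b)
  | WMul a b =>
      match deg a, deg b with
      | O, _ => WMul a (dterm i b)
      | _, O => WMul (dterm i a) b
      | _, _ => WAdd (WMul (dterm i a) b) (WMul a (dterm i b))
      end
  end.

Lemma is_poly_dterm i q : is_poly q -> is_poly (dterm i q).
Proof.
  induction q; simpl; intros; try tauto.
  destruct H. destruct (deg q1), (deg q2); simpl; tauto.
Qed.

Lemma wf_dterm n i q : wf n q -> wf n (dterm i q).
Proof.
  induction q; simpl; intros; try tauto.
  destruct H. destruct (deg q1), (deg q2); simpl; tauto.
Qed.

Lemma deg_dterm i q : (deg (dterm i q) <= deg q - 1)%nat.
Proof.
  induction q; simpl; try lia.
  destruct (deg q1) eqn:E1, (deg q2) eqn:E2; simpl; rewrite ?E1, ?E2; lia.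
Qed.

Lemma polyfun_dterm_deg0 i q : is_poly q -> deg q = 0%nat -> forall x, polyfun (dterm i q) x = C0.
Proof.
  induction q; intros Hq Hd x; simpl in *; try contradiction; try lia.
  - unfold polyfun; simpl; Cpx_ring.
  - destruct Hq. unfold polyfun in *; simpl. rewrite IHq1, IHq2 by (auto; lia). Cpx_ring.
  - destruct Hq. replace (deg q1) with 0%nat by lia.
    rewrite polyfun_mul, IHq2 by (auto; lia). Cpx_ring.
Qed.

Lemma has_pd_polyfun i q : is_poly q -> forall x, has_pd (polyfun q) i x (polyfun (dterm i q) x).
Proof.
  induction q; simpl; intros Hq x.
  - unfold polyfun; simpl. eapply has_pd_ext; [reflexivity| |apply has_pd_const]. Cpx_ring.
  - unfold polyfun; simpl. eapply has_pd_ext;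
      [reflexivity| |apply (has_pd_coord_mul i0 (fun _ => Defs.C1) i x C0), has_pd_const].
    destruct (Nat.eqb i0 i); Cpx_ring.
  - contradiction.
  - destruct Hq. apply has_pd_add; [apply IHq1|apply IHq2]; auto.
  - destruct Hq as [H1 H2].
    eapply has_pd_ext; [intro y; symmetry; apply polyfun_mul; auto| |
      apply has_pd_mul; [apply IHq1|apply IHq2]; auto].
    destruct (deg q1) eqn:E1; [|destruct (deg q2) eqn:E2].
    + rewrite polyfun_mul, (polyfun_dterm_deg0 i q1) by auto. Cpx_ring.
    + rewrite polyfun_mul, (polyfun_dterm_deg0 i q2) by (auto; apply is_poly_dterm; auto). Cpx_ring.
    + change (polyfun (WAdd (WMul (dterm i q1) q2) (WMul q1 (dterm i q2))) x) with
        (Cadd (polyfun (WMul (dterm i q1) q2) x) (polyfun (WMul q1 (dterm i q2)) x)).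
      rewrite !polyfun_mul by (auto; apply is_poly_dterm; auto). Cpx_ring.
Qed.

Fixpoint pdn (f : fn) (i k : nat) : fn :=
  match k with O => f | S k' => pdn (pd f i) i k' end.

Fixpoint WDpow (i k : nat) : wterm :=
  match k with O => WC Defs.C1 | S k' => WMul (WDpow i k') (WD i) end.

Lemma act_WDpow i k : forall f x, act (WDpow i k) f x = pdn f i k x.
Proof. induction k; intros f x; simpl; [Cpx_ring | apply IHk]. Qed.

Lemma wf_WDpow n i k : (i < n)%nat -> wf n (WDpow i k).
Proof. induction k; simpl; auto. Qed.

Lemma pdn_polyfun_high i k : forall q, is_poly q -> (deg q < k)%nat ->
  forall x, pdn (polyfun q) i k x = C0.
Proof.
  induction k; intros q Hq Hd x; [lia|]. simpl.
  replace (pd (polyfun q) i) with (polyfun (dterm i q))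
    by (apply functional_extensionality; intro y; symmetry; apply pd_eq, has_pd_polyfun; auto).
  destruct k.
  - apply polyfun_dterm_deg0; auto; lia.
  - apply IHk; [now apply is_poly_dterm | pose proof (deg_dterm i q); lia].
Qed.

(** * Functions with vanishing derivatives *)

Definition has_cderiv (u : R -> Cpx) (t : R) (l : Cpx) : Prop :=
  derivable_pt_lim (fun s => fst (u s)) t (fst l) /\
  derivable_pt_lim (fun s => snd (u s)) t (snd l).

Lemma has_pd_line f i x t l : has_pd f i (upd x i t) l -> has_cderiv (fun s => f (upd x i s)) t l.
Proof.
  assert (Shift : forall (F : R -> R) l, derivable_pt_lim (fun h => F (t + h)) 0 l ->
                    derivable_pt_lim F t l).
  { intros F l' H eps He. destruct (H eps He) as [d Hd]. exists d. intros h h0 hd.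
    specialize (Hd h h0 hd). now rewrite Rplus_0_l, Rplus_0_r in Hd. }
  intros [H1 H2]. split; apply Shift;
    [ replace (fun h => fst (f (upd x i (t + h)))) with (fun h => fst (f (upd (upd x i t) i h)))
    | replace (fun h => snd (f (upd x i (t + h)))) with (fun h => snd (f (upd (upd x i t) i h))) ];
    auto; apply functional_extensionality; intro; now rewrite upd_upd.
Qed.

Lemma const_on_interval (F : R -> R) a b : (forall t, a < t < b -> derivable_pt_lim F t 0) ->
  forall s t, a < s < b -> a < t < b -> F s = F t.
Proof.
  intros H.
  assert (K : forall s t, a < s < b -> a < t < b -> s < t -> F s = F t).
  { intros s t Hs Ht st.
    destruct (MVT_cor2 F (fun _ => 0) s t st) as [c [Hc _]]; [intros c Hc; apply H; lra | lra]. }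
  intros s t Hs Ht. destruct (Rtotal_order s t) as [h | [-> | h]]; auto.
  symmetry; auto.
Qed.

Lemma cderiv_zero_const (u : R -> Cpx) a b : (forall t, a < t < b -> has_cderiv u t C0) ->
  forall s t, a < s < b -> a < t < b -> u s = u t.
Proof.
  intros H s t Hs Ht. apply injective_projections;
    [apply (const_on_interval (fun s => fst (u s)) a b) | apply (const_on_interval (fun s => snd (u s)) a b)];
    auto; intros; apply H; auto.
Qed.

(** [u / v] has zero derivative, so [|u|^2 / |v|^2] is constant; the latter
    formulation avoids complex division. *)
Lemma cderiv_ratio_zero (u v du dv : R -> Cpx) a b :
  (forall t, a < t < b -> has_cderiv u t (du t) /\ has_cderiv v t (dv t)) ->
  (forall t, a < t < b -> v t <> C0) ->
  (forall t, a < t < b -> Cmul (v t) (du t) = Cmul (dv t) (u t)) ->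
  forall s t, a < s < b -> a < t < b -> u s = C0 -> u t = C0.
Proof.
  intros Hd Hv Hr s t Hs Ht Hus.
  assert (Hv2 : forall t, a < t < b -> fst (v t) * fst (v t) + snd (v t) * snd (v t) <> 0).
  { intros r Hr' Z. apply (Hv r Hr'). destruct (v r) as [v1 v2]; simpl in Z.
    unfold C0; f_equal; nra. }
  set (rho := fun t => (fst (u t) * fst (u t) + snd (u t) * snd (u t)) /
                       (fst (v t) * fst (v t) + snd (v t) * snd (v t))).
  assert (Drho : forall t, a < t < b -> derivable_pt_lim rho t 0).
  { intros r Hr'. destruct (Hd r Hr') as [[U1 U2] [V1 V2]].
    pose proof (derivable_pt_lim_div _ _ _ _ _
      (derivable_pt_lim_plus _ _ _ _ _ (derivable_pt_lim_mult _ _ _ _ _ U1 U1)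
                                       (derivable_pt_lim_mult _ _ _ _ _ U2 U2))
      (derivable_pt_lim_plus _ _ _ _ _ (derivable_pt_lim_mult _ _ _ _ _ V1 V1)
                                       (derivable_pt_lim_mult _ _ _ _ _ V2 V2))
      (Hv2 r Hr')) as D.
    unfold plus_fct, mult_fct in D.
    unfold rho. eapply derivable_pt_lim_eq; [|exact D].
    specialize (Hr r Hr'). destruct (u r) as [u1 u2], (v r) as [v1 v2],
      (du r) as [du1 du2], (dv r) as [dv1 dv2]; simpl in *.
    unfold Cmul in Hr; simpl in Hr. injection Hr as e1 e2.
    unfold Rdiv. apply Rmult_eq_0_compat_r.
    transitivity (2 * (((v1 * du1 - v2 * du2) - (dv1 * u1 - dv2 * u2)) * (v1 * u1 - v2 * u2) +
                       ((v1 * du2 + v2 * du1) - (dv1 * u2 + dv2 * u1)) * (v1 * u2 + v2 * u1)));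
      [ring | rewrite e1, e2; ring]. }
  assert (Rt : rho t = 0).
  { rewrite (const_on_interval rho a b Drho t s Ht Hs). unfold rho; rewrite Hus; simpl.
    unfold Rdiv; ring. }
  unfold rho, Rdiv in Rt. apply Rmult_integral in Rt as [Z | Z].
  - destruct (u t) as [u1 u2]; simpl in Z. unfold C0; f_equal; nra.
  - exfalso; exact (Rinv_neq_0_compat _ (Hv2 t Ht) Z).
Qed.

Lemma derivable_pt_lim_locally_zero (F : R -> R) d : 0 < d ->
  (forall h, Rabs h < d -> F h = 0) -> derivable_pt_lim F 0 0.
Proof.
  intros Hd H eps He. exists (mkposreal d Hd). intros h h0 hh; simpl in hh.
  rewrite Rplus_0_l, (H h hh), (H 0) by (rewrite Rabs_R0; lra).
  unfold Rminus, Rdiv. rewrite Rplus_opp_r, Rmult_0_l, Rplus_0_l, Ropp_0, Rabs_R0. lra.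
Qed.

Lemma pd_zero_on_segment f i x a b : (forall t, a < t < b -> f (upd x i t) = C0) ->
  forall t, a < t < b -> pd f i (upd x i t) = C0.
Proof.
  intros Hz t Ht. apply pd_eq.
  assert (Hd : 0 < Rmin (t - a) (b - t)) by (apply Rmin_pos; lra).
  assert (Z : forall h, Rabs h < Rmin (t - a) (b - t) -> f (upd (upd x i t) i h) = C0).
  { intros h Hh. rewrite upd_upd. apply Hz.
    pose proof (Rmin_l (t - a) (b - t)); pose proof (Rmin_r (t - a) (b - t)).
    destruct (Rabs_def2 h _ Hh). lra. }
  split; apply (derivable_pt_lim_locally_zero _ _ Hd); intros h Hh; now rewrite (Z h Hh).
Qed.

Lemma pd_zero_on_line_const n f i x : (i < n)%nat -> smooth n f ->
  (forall t, pd f i (upd x i t) = C0) -> forall s t, f (upd x i s) = f (upd x i t).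
Proof.
  intros Hi Hf Hz s t.
  apply (cderiv_zero_const (fun s => f (upd x i s)) (Rmin s t - 1) (Rmax s t + 1));
    [| pose proof (Rmin_l s t); pose proof (Rmax_l s t); lra
     | pose proof (Rmin_r s t); pose proof (Rmax_r s t); lra].
  intros r _. apply has_pd_line. rewrite <- (Hz r).
  apply has_pd_pd, (smooth_pdifferentiable n); auto.
Qed.

Lemma pdn_zero_line_vanish n i N : (i < n)%nat -> forall f, smooth n f ->
  (forall y, pdn f i N y = C0) ->
  forall x a b, a < b -> (forall t, a < t < b -> f (upd x i t) = C0) -> forall t, f (upd x i t) = C0.
Proof.
  intros Hi. induction N as [|N IH]; intros f Hf HN x a b ab Hz t; [apply HN|].
  assert (Hpd := IH (pd f i) (smooth_pd n f i Hi Hf) HN x a b ab (pd_zero_on_segment f i x a b Hz)).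
  rewrite (pd_zero_on_line_const n f i x Hi Hf Hpd t ((a + b) / 2)).
  apply Hz; lra.
Qed.

Definition in_box (n : nat) (x0 : pt) (del : R) (y : pt) : Prop :=
  forall j, (j < n)%nat -> Rabs (y j - x0 j) < del.

(** Move the coordinates of [y] into the box one at a time, along lines. *)
Lemma pdn_zero_box_vanish n h x0 del : smooth n h ->
  (forall i, (i < n)%nat -> exists N, forall y, pdn h i N y = C0) ->
  0 < del -> (forall y, in_box n x0 del y -> h y = C0) -> forall y, h y = C0.
Proof.
  intros Hs HN Hd Hbox.
  assert (K : forall k, (k <= n)%nat ->
            forall y, (forall j, (k <= j < n)%nat -> Rabs (y j - x0 j) < del) -> h y = C0).
  { induction k as [|k IH]; intros Hk y Hy.
    - apply Hbox; intros j Hj; apply Hy; lia.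
    - destruct (HN k) as [N HNk]; [lia|].
      rewrite <- (upd_0 y k).
      apply (pdn_zero_line_vanish n k N ltac:(lia) h Hs HNk y (x0 k - del - y k) (x0 k + del - y k));
        [lra|].
      intros t Ht. apply IH; [lia|]. intros j Hj. unfold upd.
      destruct (Nat.eqb_spec j k) as [->|]; [apply Rabs_def1; lra | apply Hy; lia]. }
  intro y. apply (K n); auto. intros; lia.
Qed.

Lemma in_box_upd n x0 del y k t : in_box n x0 del y -> Rabs (y k + t - x0 k) < del ->
  in_box n x0 del (upd y k t).
Proof. intros Hy Ht j Hj. unfold upd. destruct (Nat.eqb_spec j k) as [->|]; auto. Qed.

(** [h / Q] has zero partial derivatives on the box. *)
Lemma proportional_box_vanish n h Q x0 del : smooth n h -> smooth n Q ->
  (forall y, in_box n x0 del y -> Q y <> C0) ->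
  (forall i, (i < n)%nat -> forall y, Cmul (Q y) (pd h i y) = Cmul (pd Q i y) (h y)) ->
  h x0 = C0 -> forall y, in_box n x0 del y -> h y = C0.
Proof.
  intros Hh HQ HQnz Hrel Hx0.
  assert (K : forall k, (k <= n)%nat -> forall y, in_box n x0 del y ->
            (forall j, (k <= j < n)%nat -> y j = x0 j) -> h y = C0).
  { induction k as [|k IH]; intros Hk y Hy Hyx.
    - rewrite <- Hx0. apply (proj1 Hh). intros j Hj; apply Hyx; lia.
    - set (y' := upd y k (x0 k - y k)).
      assert (Hy'k : y' k = x0 k) by (unfold y', upd; rewrite Nat.eqb_refl; ring).
      assert (Hdk : - del < y k - x0 k < del)
        by (destruct (Rabs_def2 _ _ (Hy k ltac:(lia))); lra).
      assert (Hseg : forall t, - del < t < del -> in_box n x0 del (upd y' k t)).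
      { intros t Ht. apply in_box_upd; [apply in_box_upd; auto|].
        - replace (y k + (x0 k - y k) - x0 k) with 0 by ring. rewrite Rabs_R0; lra.
        - rewrite Hy'k. apply Rabs_def1; lra. }
      assert (Hy'0 : h (upd y' k 0) = C0).
      { apply IH; [lia | apply Hseg; lra |].
        intros j Hj. rewrite upd_0. unfold y', upd.
        destruct (Nat.eqb_spec j k) as [->|]; [ring | apply Hyx; lia]. }
      replace y with (upd y' k (y k - x0 k))
        by (unfold y'; rewrite upd_upd; replace (x0 k - y k + (y k - x0 k)) with 0 by ring;
            apply upd_0).
      refine (cderiv_ratio_zero (fun t => h (upd y' k t)) (fun t => Q (upd y' k t))
                (fun t => pd h k (upd y' k t)) (fun t => pd Q k (upd y' k t))
                (- del) del _ _ _ 0 _ ltac:(lra) Hdk Hy'0).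
      + intros t _. split; apply has_pd_line, has_pd_pd, (smooth_pdifferentiable n); auto; lia.
      + intros t Ht; apply HQnz, Hseg, Ht.
      + intros t _; apply Hrel; lia. }
  intros y Hy. apply (K n); auto. intros; lia.
Qed.

(** * Rows of operators *)

Definition single (j1 : nat) (t : wterm) : nat -> wterm :=
  fun j => if Nat.eqb j j1 then t else WC C0.

Lemma wf_single n j1 t : wf n t -> forall j, wf n (single j1 t j).
Proof. intros H j; unfold single; destruct (Nat.eqb j j1); simpl; auto. Qed.

Lemma rowact_ext m a b g g' :
  (forall j, (j < m)%nat -> forall x, act (a j) (g j) x = act (b j) (g' j) x) ->
  forall x, rowact m a g x = rowact m b g' x.
Proof. induction m; simpl; intros H x; auto. rewrite IHm, H; auto. Qed.

Lemma rowact_zero m a g : (forall j, (j < m)%nat -> forall x, act (a j) (g j) x = C0) ->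
  forall x, rowact m a g x = C0.
Proof. induction m; simpl; intros H x; auto. rewrite IHm, H by auto. Cpx_ring. Qed.

Lemma rowact_WAdd m a b g x :
  rowact m (fun j => WAdd (a j) (b j)) g x = Cadd (rowact m a g x) (rowact m b g x).
Proof. induction m; simpl; [Cpx_ring | rewrite IHm; Cpx_ring]. Qed.

Lemma rowact_single m j1 t g : (j1 < m)%nat -> forall x, rowact m (single j1 t) g x = act t (g j1) x.
Proof.
  induction m; simpl; intros H x; [lia|].
  unfold single at 2. destruct (Nat.eqb_spec m j1) as [->|].
  - rewrite rowact_zero; [Cpx_ring|].
    intros j Hj y. unfold single. destruct (Nat.eqb_spec j j1); [lia | simpl; Cpx_ring].
  - rewrite IHm by lia. simpl; Cpx_ring.
Qed.

Lemma smooth_rowact n m a g : (forall j, (j < m)%nat -> wf n (a j) /\ smooth n (g j)) ->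
  smooth n (rowact m a g).
Proof.
  induction m; simpl; intros H; [apply smooth_const|].
  apply smooth_add; [apply IHm; auto|]. destruct (H m); auto. now apply smooth_act.
Qed.

Lemma rowact_WMul n m w a g : wf n w -> (forall j, (j < m)%nat -> wf n (a j) /\ smooth n (g j)) ->
  forall x, rowact m (fun j => WMul w (a j)) g x = act w (rowact m a g) x.
Proof.
  induction m; simpl; intros Hw H x; [symmetry; apply act_zero|].
  rewrite IHm by auto. destruct (H m) as [H1 H2]; auto.
  rewrite (act_add n w); auto; [apply smooth_rowact | apply smooth_act]; auto.
Qed.

Lemma rowact_add n m a g g' : (forall j, (j < m)%nat -> wf n (a j) /\ smooth n (g j) /\ smooth n (g' j)) ->
  forall x, rowact m a (fun j y => Cadd (g j y) (g' j y)) x = Cadd (rowact m a g x) (rowact m a g' x).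
Proof.
  induction m; simpl; intros H x; [Cpx_ring|].
  rewrite IHm by auto. destruct (H m) as [? [? ?]]; auto. rewrite (act_add n); auto. Cpx_ring.
Qed.

Lemma rowact_scal n m a c g : (forall j, (j < m)%nat -> wf n (a j) /\ smooth n (g j)) ->
  forall x, rowact m a (fun j y => Cmul c (g j y)) x = Cmul c (rowact m a g x).
Proof.
  induction m; simpl; intros H x; [Cpx_ring|].
  rewrite IHm by auto. destruct (H m); auto. rewrite (act_scal n); auto. Cpx_ring.
Qed.

Lemma cont_nonzero_box n Q x0 : cont n Q -> Q x0 <> C0 ->
  exists del, 0 < del /\ forall y, in_box n x0 del y -> Q y <> C0.
Proof.
  intros HQ Hx0. destruct (HQ x0 (cnorm (Q x0)) (cnorm_gt0 _ Hx0)) as [del [Hdel Hc]].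
  exists del; split; auto. intros y Hy Z. specialize (Hc y Hy). rewrite Z in Hc.
  replace (Cadd C0 (Cneg (Q x0))) with (Cneg (Q x0)) in Hc by Cpx_ring.
  rewrite cnorm_Cneg in Hc. lra.
Qed.

(** * Solutions of [R g = 0] *)

Definition solves (n m r : nat) (Rm : nat -> nat -> wterm) (g : nat -> fn) : Prop :=
  (forall j, (j < m)%nat -> smooth n (g j)) /\
  (forall k, (k < r)%nat -> forall x, rowact m (Rm k) g x = C0).

Section Solutions.

Variables (n m r : nat) (p : nat -> wterm) (Rm : nat -> nat -> wterm).

Hypothesis Hp : forall j, (j < m)%nat -> wf n (p j) /\ is_poly (p j).
Hypothesis HR : forall k j, (k < r)%nat -> (j < m)%nat -> wf n (Rm k j).
Hypothesis Hker : forall k, (k < r)%nat -> forall x, rowact m (Rm k) (fun j => polyfun (p j)) x = C0.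
Hypothesis Hgen : forall a : nat -> wterm,
  (forall j, (j < m)%nat -> wf n (a j)) ->
  (forall x, rowact m a (fun j => polyfun (p j)) x = C0) ->
  exists w : nat -> wterm,
    (forall k, (k < r)%nat -> wf n (w k)) /\
    forall j, (j < m)%nat -> weq n (a j) (wsum r (fun k => WMul (w k) (Rm k j))).

Lemma solves_scaled_p c : solves n m r Rm (fun j y => Cmul c (polyfun (p j) y)).
Proof.
  assert (Sp : forall j, (j < m)%nat -> smooth n (polyfun (p j)))
    by (intros j Hj; apply smooth_polyfun, Hp, Hj).
  split; [intros; apply smooth_scal, Sp; auto|].
  intros k Hk x. rewrite (rowact_scal n m (Rm k) c (fun j => polyfun (p j)) ltac:(intros; split; auto)), Hker by auto. Cpx_ring.
Qed.

Lemma solves_add g g' : solves n m r Rm g -> solves n m r Rm g' ->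
  solves n m r Rm (fun j y => Cadd (g j y) (g' j y)).
Proof.
  intros [Sg Hg] [Sg' Hg']. split; [intros; apply smooth_add; auto|].
  intros k Hk x. rewrite (rowact_add n m (Rm k) g g' ltac:(intros; split; [|split]; auto)), Hg, Hg' by auto. Cpx_ring.
Qed.

(** Every row [a] of [ker(kappa_p)] is a left combination [sum_k w_k R_k], so
    [a g = sum_k w_k (R_k g) = 0]. *)
Lemma solves_annihilated g : solves n m r Rm g ->
  forall a, (forall j, (j < m)%nat -> wf n (a j)) ->
  (forall x, rowact m a (fun j => polyfun (p j)) x = C0) -> forall x, rowact m a g x = C0.
Proof.
  intros [Sg Hg] a Ha Hap x.
  destruct (Hgen a Ha Hap) as [w [Hw Hweq]].
  rewrite (rowact_ext m a (fun j => wsum r (fun k => WMul (w k) (Rm k j))) g g)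
    by (intros j Hj y; apply Hweq; auto).
  assert (K : forall r', (r' <= r)%nat ->
            rowact m (fun j => wsum r' (fun k => WMul (w k) (Rm k j))) g x = C0).
  { induction r' as [|r' IH]; intros Hr'; simpl.
    - apply rowact_zero. intros; simpl; Cpx_ring.
    - rewrite rowact_WAdd, IH by lia.
      rewrite (rowact_WMul n) by (auto; intros j Hj; split; auto; apply HR; auto; lia).
      replace (rowact m (Rm r') g) with (fun _ : pt => C0)
        by (apply functional_extensionality; intro; symmetry; apply Hg; lia).
      rewrite act_zero. Cpx_ring. }
  now apply K.
Qed.

Lemma solves_pdn_high g j i : solves n m r Rm g -> (j < m)%nat -> (i < n)%nat ->
  forall y, pdn (g j) i (S (deg (p j))) y = C0.
Proof.
  intros Hg Hj Hi y.
  rewrite <- act_WDpow, <- (rowact_single m j _ g) by auto.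
  apply (solves_annihilated g Hg); [intros; apply wf_single, wf_WDpow; auto|].
  intro x. rewrite rowact_single, act_WDpow by auto. apply pdn_polyfun_high; [apply Hp | lia]; auto.
Qed.

(** [p_j d_i - d_i(p_j)] at position [j] lies in [ker(kappa_p)]. *)
Lemma solves_log_derivative g j i : solves n m r Rm g -> (j < m)%nat -> (i < n)%nat ->
  forall y, Cmul (polyfun (p j) y) (pd (g j) i y) = Cmul (pd (polyfun (p j)) i y) (g j y).
Proof.
  intros Hg Hj Hi y. destruct (Hp j Hj) as [Hwf Hpoly].
  set (t := WAdd (WMul (p j) (WD i)) (WMul (WC (Cneg Defs.C1)) (dterm i (p j)))).
  assert (Ht : forall f x, act t f x =
            Cadd (Cmul (polyfun (p j) x) (pd f i x)) (Cneg (Cmul (pd (polyfun (p j)) i x) (f x)))).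
  { intros f x. unfold t; simpl. rewrite !act_poly by (auto; apply is_poly_dterm; auto).
    rewrite (pd_eq _ i x _ (has_pd_polyfun i (p j) Hpoly x)). Cpx_ring. }
  assert (E := solves_annihilated g Hg (single j t)).
  specialize (E ltac:(intros; apply wf_single; unfold t; simpl; auto using wf_dterm)).
  specialize (E ltac:(intro x; rewrite rowact_single, Ht by auto; Cpx_ring) y).
  rewrite rowact_single, Ht in E by auto.
  destruct (polyfun (p j) y), (pd (g j) i y), (pd (polyfun (p j)) i y), (g j y).
  unfold Cadd, Cmul, Cneg, C0 in *; simpl in *. injection E; intros; f_equal; lra.
Qed.

(** [p_j' e_j - p_j e_j'] lies in [ker(kappa_p)]. *)
Lemma solves_cross g j j' : solves n m r Rm g -> (j < m)%nat -> (j' < m)%nat ->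
  forall y, Cmul (polyfun (p j') y) (g j y) = Cmul (polyfun (p j) y) (g j' y).
Proof.
  intros Hg Hj Hj' y.
  assert (Hwf : forall l, (l < m)%nat -> wf n (p l)) by (intros; apply Hp; auto).
  set (a := fun l => WAdd (single j (p j') l) (single j' (WMul (WC (Cneg Defs.C1)) (p j)) l)).
  assert (Ha : forall f x, rowact m a f x =
            Cadd (Cmul (polyfun (p j') x) (f j x)) (Cneg (Cmul (polyfun (p j) x) (f j' x)))).
  { intros f x. unfold a. rewrite rowact_WAdd, !rowact_single by auto. simpl.
    rewrite !act_poly by (apply Hp; auto). Cpx_ring. }
  assert (E := solves_annihilated g Hg a).
  specialize (E ltac:(intros l Hl; unfold a; simpl; split; apply wf_single; simpl; auto)).
  specialize (E ltac:(intro x; rewrite Ha; Cpx_ring) y).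
  rewrite Ha in E.
  destruct (polyfun (p j') y), (g j y), (polyfun (p j) y), (g j' y).
  unfold Cadd, Cmul, Cneg, C0 in *; simpl in *. injection E; intros; f_equal; lra.
Qed.

Lemma solves_vanish g j0 x0 : solves n m r Rm g -> (j0 < m)%nat ->
  polyfun (p j0) x0 <> C0 -> g j0 x0 = C0 -> forall j, (j < m)%nat -> forall x, g j x = C0.
Proof.
  intros Hg Hj0 Hpx0 Hgx0.
  assert (SQ : smooth n (polyfun (p j0))) by (apply smooth_polyfun, Hp; auto).
  destruct (cont_nonzero_box n _ x0 (smooth_cont n _ SQ) Hpx0) as [del [Hdel Hnz]].
  assert (Hbox0 : forall y, in_box n x0 del y -> g j0 y = C0).
  { apply (proportional_box_vanish n (g j0) (polyfun (p j0))); auto; [apply (proj1 Hg); auto|].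
    intros i Hi y. apply (solves_log_derivative g j0 i); auto. }
  intros j Hj. apply (pdn_zero_box_vanish n (g j) x0 del); auto.
  - apply (proj1 Hg); auto.
  - intros i Hi. exists (S (deg (p j))). now apply solves_pdn_high.
  - intros y Hy. apply (Cmul_eq0_reg_l (polyfun (p j0) y)); [now apply Hnz|].
    rewrite (solves_cross g j j0 Hg Hj Hj0 y), Hbox0 by auto. Cpx_ring.
Qed.

End Solutions.

Theorem theorem5p2 (n m r : nat) (p : nat -> wterm) (Rm : nat -> nat -> wterm) :
  (forall j, (j < m)%nat -> wf n (p j) /\ is_poly (p j)) ->
  (exists j x, (j < m)%nat /\ polyfun (p j) x <> C0) ->
  (forall k j, (k < r)%nat -> (j < m)%nat -> wf n (Rm k j)) ->
  (forall k, (k < r)%nat -> forall x, rowact m (Rm k) (fun j => polyfun (p j)) x = C0) ->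
  (forall a : nat -> wterm,
     (forall j, (j < m)%nat -> wf n (a j)) ->
     (forall x, rowact m a (fun j => polyfun (p j)) x = C0) ->
     exists w : nat -> wterm,
       (forall k, (k < r)%nat -> wf n (w k)) /\
       forall j, (j < m)%nat -> weq n (a j) (wsum r (fun k => WMul (w k) (Rm k j)))) ->
  forall g : nat -> fn,
    (forall j, (j < m)%nat -> smooth n (g j)) ->
    ((forall k, (k < r)%nat -> forall x, rowact m (Rm k) g x = C0) <->
     exists c : Cpx, forall j, (j < m)%nat -> forall x, g j x = Cmul c (polyfun (p j) x)).
Proof.
  intros Hp [j0 [x0 [Hj0 Hpx0]]] HR Hker Hgen g Hg. split.
  - intros HRg.
    set (c := Cmul (g j0 x0) (Cinv (polyfun (p j0) x0))).
    exists c. intros j Hj x. apply Csub_scal_eq0.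
    apply (solves_vanish n m r p Rm Hp HR Hgen
             (fun j y => Cadd (g j y) (Cmul (Cneg c) (polyfun (p j) y))) j0 x0); auto.
    + apply (solves_add n m r Rm HR); [split; auto | apply (solves_scaled_p n m r p Rm Hp HR Hker)].
    + unfold c. rewrite <- (Cmul_Cinv_cancel (g j0 x0) (polyfun (p j0) x0)) at 1 by auto. Cpx_ring.
  - intros [c Hc] k Hk x.
    rewrite (rowact_ext m (Rm k) (Rm k) g (fun j y => Cmul c (polyfun (p j) y)))
      by (intros j Hj y; f_equal; apply functional_extensionality; intro; auto).
    apply (solves_scaled_p n m r p Rm Hp HR Hker c); auto.
Qed.
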